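(* Let $i$ be a positive integer. The number of points $P\in\mathcal X_3(\overline{\mathbb F}_{q^2})\setminus\mathcal O$ such that $\alpha(P)$ has $\mathcal P$-order $i$ equals $(q+1)^2\varphi(i+1)$ if $\gcd(i+1,p)=1$, and $0$ otherwise. Moreover, a point $P\in\mathcal X_3(\overline{\mathbb F}_{q^2})\setminus\mathcal O$ is $\mathbb F_{q^2}$-rational if and only if $\alpha(P)^2-\alpha(P)+1=0$ or the $\mathcal P$-order $i$ of $\alpha(P)$ satisfies that $i+1$ divides $m$.
   Context: $\varphi$ is Euler's totient function. Let $q$ be a prime power with $q\equiv2\pmod3$, $p$ its characteristic, $m=(q+1)/3$, and let $\mathcal X_3$ be the nonsingular projective model (defined over $\mathbb F_{q^2}$) of the plane curve $y^{q+1}+x^{2m}+x^m=0$. Let $\mathcal O_0$ be the $m$ points centered at the singular point $(0,0)$ and $\mathcal O_\infty$ the $m$ points over the point at infinity; other points have affine coordinates $(a,b)$, $a\ne0$, and are denoted $P_{(a,b)}$. Let $\mathcal O_m=\{P_{(a,0)}:a^m+1=0\}$, $\mathcal O=\mathcal O_0\cup\mathcal O_\infty\cup\mathcal O_m$, and for $P=P_{(a,b)}\notin\mathcal O$, $\alpha(P)=a^m/(1+a^m)$. Fix a primitive cube root of unity $\zeta_3\in\mathbb F_{q^2}$, let $\mathcal P_i(s)=\frac{(s+\zeta_3)^{3i}-(s+\zeta_3^2)^{3i}}{3(\zeta_3-\zeta_3^2)s(s-1)}$, and for $\alpha\in\overline{\mathbb F}_{q^2}\setminus\{0,1,-\zeta_3,-\zeta_3^2\}$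 let the $\mathcal P$-order of $\alpha$ be the smallest positive integer $i$ with $\mathcal P_{i+1}(\alpha)=0$. *)

From mathcomp Require Import all_boot all_algebra.
Set Implicit Arguments. Unset Strict Implicit. Unset Printing Implicit Defensive.
Import GRing.Theory.
Local Open Scope ring_scope.

Definition mq (q : nat) : nat := (q.+1 %/ 3)%N.

Definition Pcal (K : fieldType) (z : K) (i : nat) (s : K) : K :=
  ((s + z) ^+ (3 * i) - (s + z ^+ 2) ^+ (3 * i)) /
  (3%:R * (z - z ^+ 2) * s * (s - 1)).

Definition Porder (K : fieldType) (z : K) (al : K) (i : nat) : Prop :=
  [/\ al != 0, al != 1, al != - z & al != - z ^+ 2] /\
  (0 < i)%N /\ Pcal z i.+1 al = 0 /\
  (forall j : nat, (0 < j < i)%N -> Pcal z j.+1 al != 0).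

Definition onX3 (K : fieldType) (q : nat) (P : K * K) : Prop :=
  P.1 != 0 /\ P.2 ^+ q.+1 + P.1 ^+ (2 * mq q) + P.1 ^+ mq q = 0.

(* P in X_3 \ O : affine points with a <> 0, not in O_m *)
Definition inX3minusO (K : fieldType) (q : nat) (P : K * K) : Prop :=
  onX3 q P /\ P.1 ^+ mq q + 1 != 0.

Definition alpha (K : fieldType) (q : nat) (P : K * K) : K :=
  P.1 ^+ mq q / (1 + P.1 ^+ mq q).

Definition rationalq2 (K : fieldType) (q : nat) (P : K * K) : Prop :=
  P.1 ^+ (q ^ 2) = P.1 /\ P.2 ^+ (q ^ 2) = P.2.

(* With t = (al + z) / (al + z^2) one has P_j(al) = 0 iff t^(3j) = 1, so al has
   P-order i exactly when t^3 is a primitive (i+1)-th root of unity.  For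
   al = u / (1 + u) with u = a^m, t is the image of u under the Moebius involution
   u |-> (1 - z u) / (z - u).  Hence the points of P-order i are parametrised by a
   primitive (i+1)-th root of unity (phi(i+1) choices, none when p | i+1), one of its
   3 cube roots t, one of the m m-th roots a of the involution of t, and one of the
   q+1 roots b of b^(q+1) = -(a^(2m) + a^m): 3 m (q+1) phi(i+1) = (q+1)^2 phi(i+1).
   For rationality, x^(q^2) = x iff x^(q+1) is Frobenius-fixed; for a and b this
   reduces to u^q = u or u^2 + u + 1 = 0, and u^q = u iff t^(q+1) = (t^3)^m = 1. *)

From mathcomp Require Import all_boot all_algebra cyclic separable cyclotomic.
From mathcomp Require Import ring zify.
Import GRing.Theory.
Local Open Scope ring_scope.
Set Implicit Arguments. Unset Strict Implicit. Unset Printing Implicit Defensive.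

Definition has_card (T : eqType) (P : T -> Prop) (n : nat) : Prop :=
  exists s : seq T, [/\ uniq s, size s = n & forall x, x \in s <-> P x].

Lemma has_card_ext (T : eqType) (P Q : T -> Prop) n :
  (forall x, P x <-> Q x) -> has_card P n -> has_card Q n.
Proof. by move=> PQ [s [us ss sP]]; exists s; split=> // x; rewrite sP. Qed.

Lemma has_card0 (T : eqType) (P : T -> Prop) : (forall x, ~ P x) -> has_card P 0.
Proof. by move=> nP; exists [::]; split=> // x; split=> // /nP. Qed.

Lemma has_card_pair_fst (T U : eqType) (P : U -> Prop) (a : T) n :
  has_card P n -> has_card (fun xy : T * U => xy.1 = a /\ P xy.2) n.
Proof.
case=> s [us ss sP]; exists [seq (a, y) | y <- s]; split.
- by rewrite map_inj_uniq // => y y' [].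
- by rewrite size_map.
case=> x y /=; split; first by case/mapP=> y' /sP Py [-> ->].
by case=> -> /sP sy; apply/mapP; exists y.
Qed.

Lemma has_card_bind_seq (T U : eqType) (s : seq T) (R : T -> U -> Prop) (g : U -> T) N :
    uniq s -> (forall x, x \in s -> has_card (R x) N) ->
    (forall x y, x \in s -> R x y -> g y = x) ->
  has_card (fun y => exists2 x, x \in s & R x y) (N * size s).
Proof.
elim: s => [_ _ _ | x s IHs /= /andP[xs us] sR gR].
  by rewrite muln0; apply: has_card0 => y [].
have s_xs x' : x' \in s -> x' \in x :: s by rewrite inE orbC => ->.
have [t [ut st tR]] := IHs us (fun x' s_x' => sR x' (s_xs x' s_x'))
  (fun x' y s_x' => gR x' y (s_xs x' s_x')).
have [r [ur sr rR]] := sR x (mem_head x s).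
exists (r ++ t); split.
- rewrite cat_uniq ur ut andbT; apply/hasP => -[y /tR[x' s_x' Rx'y] /rR Rxy].
  by move: xs; rewrite -(gR _ _ (mem_head x s) Rxy) (gR _ _ (s_xs _ s_x') Rx'y) s_x'.
- by rewrite size_cat sr st mulnS.
move=> y; rewrite mem_cat; split.
  case/orP=> [/rR | /tR[x' s_x']]; first by exists x; rewrite ?mem_head.
  by exists x'; rewrite // inE s_x' orbT.
case=> x'; rewrite inE => /orP[/eqP-> /rR -> // | s_x' Rx'y].
by apply/orP; right; apply/tR; exists x'.
Qed.

Lemma has_card_bind (T U : eqType) (P : T -> Prop) (R : T -> U -> Prop) (g : U -> T) n N :
    has_card P n -> (forall x, P x -> has_card (R x) N) ->
    (forall x y, P x -> R x y -> g y = x) ->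
  has_card (fun y => exists2 x, P x & R x y) (N * n).
Proof.
case=> s [us <- sP] PR gR.
have := has_card_bind_seq us (fun x s_x => PR x ((sP x).1 s_x))
  (fun x y s_x => gR x y ((sP x).1 s_x)).
by apply: has_card_ext => y; split=> -[x /sP]; exists x.
Qed.

Section ClosedFieldRoots.

Variable K : closedFieldType.

Lemma prim_root_exists n : n%:R != 0 :> K -> exists w : K, n.-primitive_root w.
Proof.
move=> n_neq0; have n_gt0 : (0 < n)%N by case: n n_neq0 => //; rewrite eqxx.
have [r Dp] := closed_field_poly_normal ('X^n - 1 : {poly K}).
rewrite (monicP (monicXnsubC 1 n_gt0)) scale1r in Dp.
have r_unity : all n.-unity_root r by apply/allP=> w; rewrite -root_prod_XsubC -Dp.
have size_r : (n < (size r).+1)%N by rewrite -(size_prod_XsubC r id) -Dp size_XnsubC.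
have [|w] := hasP (has_prim_root n_gt0 r_unity _ size_r); last by exists w.
by rewrite -separable_prod_XsubC -Dp separable_Xn_sub_1.
Qed.

Lemma has_card_roots n (c : K) :
  n%:R != 0 :> K -> c != 0 -> has_card (fun x => x ^+ n = c) n.
Proof.
move=> n_neq0 c_neq0; have [w w_prim] := prim_root_exists n_neq0.
have n_gt0 := prim_order_gt0 w_prim.
have [x0 /rootP] : exists x0, root ('X^n - c%:P) x0.
  by apply/closed_rootP; rewrite size_XnsubC // eqSS -lt0n.
rewrite !hornerE => /eqP; rewrite subr_eq0 => /eqP x0n.
have x0_neq0 : x0 != 0.
  by apply: contraNneq c_neq0 => x0_0; rewrite -x0n x0_0 expr0n gtn_eqF.
exists [seq x0 * w ^+ k | k <- iota 0 n]; split.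
- rewrite map_inj_in_uniq ?iota_uniq // => i j; rewrite !mem_iota => lt_i lt_j.
  by move/(mulfI x0_neq0)/eqP; rewrite (eq_prim_root_expr w_prim) !modn_small // => /eqP.
- by rewrite size_map size_iota.
move=> x; split.
  by case/mapP=> k _ ->; rewrite exprMn exprAC (prim_expr_order w_prim) expr1n mulr1.
move=> xn; have : (x / x0) ^+ n = 1 by rewrite exprMn exprVn xn x0n mulfV.
case/(prim_rootP w_prim) => k Dk; apply/mapP; exists (val k).
  by rewrite mem_iota add0n ltn_ord.
by rewrite -Dk mulrC divfK.
Qed.

Lemma has_card_prim_roots n :
  n%:R != 0 :> K -> has_card (fun x : K => n.-primitive_root x) (totient n).
Proof.
move=> n_neq0; have [w w_prim] := prim_root_exists n_neq0.
exists [seq w ^+ k | k <- iota 0 n & coprime k n]; split.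
- rewrite map_inj_in_uniq ?filter_uniq ?iota_uniq // => i j.
  rewrite !mem_filter !mem_iota => /andP[_ lt_i] /andP[_ lt_j].
  by move/eqP; rewrite (eq_prim_root_expr w_prim) !modn_small // => /eqP.
- rewrite size_map size_filter totient_count_coprime -sum1_count big_mkcond /index_iota subn0.
  by apply: eq_bigr => k _; rewrite coprime_sym; case: coprime.
move=> x; split.
  by case/mapP=> k; rewrite mem_filter => /andP[k_cop _] ->; rewrite prim_root_exp_coprime.
move=> x_prim; have [k Dk] := prim_rootP w_prim (prim_expr_order x_prim).
apply/mapP; exists (val k) => //.
by rewrite mem_filter mem_iota /= ltn_ord andbT -(prim_root_exp_coprime _ w_prim) -Dk.
Qed.

End ClosedFieldRoots.

Lemma prim_root_succP (R : idomainType) (x : R) n :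
  reflect (x ^+ n.+1 = 1 /\ forall j, (j < n)%N -> x ^+ j.+1 != 1)
          (n.+1.-primitive_root x).
Proof.
apply: (iffP idP) => [x_prim | [xn xj]].
  split=> [|j lt_jn]; first exact: prim_expr_order.
  by rewrite -(prim_order_dvd x_prim) gtnNdvd.
have [d d_prim d_dvd] := prim_order_exists (ltn0Sn n) xn.
case: (ltnP d n.+1) => [lt_dn | le_nd].
  case: d lt_dn d_prim {d_dvd} => [|d lt_dn d_prim] //.
  by have := xj d lt_dn; rewrite (prim_expr_order d_prim) eqxx.
suff -> : n.+1 = d by [].
by apply/eqP; rewrite eqn_leq le_nd dvdn_leq.
Qed.

Lemma expr_eq1_prim_order (R : idomainType) (x : R) m : (0 < m)%N ->
  x ^+ m = 1 <-> exists2 n, n.-primitive_root x & (n %| m)%N.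
Proof.
move=> m_gt0; split=> [xm | [n x_prim]]; first by have [n] := prim_order_exists m_gt0 xm; exists n.
by rewrite (prim_order_dvd x_prim) => /eqP.
Qed.

Section CubeRootOfUnity.

Variables (K : fieldType) (z : K).
Hypothesis z_prim : 3.-primitive_root z.

Lemma z_expr3 : z ^+ 3 = 1. Proof. exact: prim_expr_order. Qed.

Lemma z_neq0 : z != 0. Proof. by rewrite (prim_root_eq0 z_prim). Qed.

Lemma z_neq1 : z != 1.
Proof. by rewrite -[z]expr1 -(prim_order_dvd z_prim). Qed.

Lemma z_sqrE : z ^+ 2 = - z - 1.
Proof.
have z_subr1_neq0 : z - 1 != 0 by rewrite subr_eq0 z_neq1.
by apply: (mulfI z_subr1_neq0); ring: z_expr3.
Qed.

Lemma z2_neq_z : z ^+ 2 != z.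
Proof. by rewrite -[X in _ != X]expr1 (eq_prim_root_expr z_prim). Qed.

Lemma z2_neq1 : z ^+ 2 != 1.
Proof. by rewrite -(prim_order_dvd z_prim). Qed.

Definition pratio (al : K) := (al + z) / (al + z ^+ 2).

Definition mob (u : K) := (1 - z * u) / (z - u).

Lemma Pcal_eq0 al j : al != 0 -> al != 1 -> al != - z ^+ 2 ->
  (Pcal z j al == 0) = (pratio al ^+ 3 ^+ j == 1).
Proof.
move=> al_neq0 al_neq1 al_neqNz2.
have den_neq0 : 3%:R * (z - z ^+ 2) * al * (al - 1) != 0.
  by rewrite !mulf_neq0 ?(prim_root_natf_neq0 z_prim) // subr_eq0 // eq_sym z2_neq_z.
have d_neq0 : (al + z ^+ 2) ^+ (3 * j) != 0 by rewrite expf_neq0 // addr_eq0.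
rewrite /Pcal mulf_eq0 invr_eq0 (negbTE den_neq0) orbF subr_eq0 -exprM /pratio.
by rewrite expr_div_n (can2_eq (divfK d_neq0) (mulfK d_neq0)) mul1r.
Qed.

Lemma pratio_expr3_subr1 al : al + z ^+ 2 != 0 ->
  pratio al ^+ 3 - 1 =
    (z - z ^+ 2) * (1 - z) * (1 - z ^+ 2) * (al - 1) * al / (al + z ^+ 2) ^+ 3.
Proof.
move=> d_neq0.
transitivity (((al + z) ^+ 3 - (al + z ^+ 2) ^+ 3) / (al + z ^+ 2) ^+ 3).
  by rewrite /pratio; field.
by congr (_ / _); ring: z_sqrE.
Qed.

Lemma pratio_expr3_eq1 al : al != - z ^+ 2 ->
  (pratio al ^+ 3 == 1) = (al == 0) || (al == 1).
Proof.
move=> al_neqNz2; have d_neq0 : al + z ^+ 2 != 0 by rewrite addr_eq0.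
rewrite -subr_eq0 pratio_expr3_subr1 // mulf_eq0 invr_eq0 expf_eq0 (negbTE d_neq0) andbF.
rewrite orbF !mulf_eq0 !subr_eq0 eq_sym (negbTE z2_neq_z) eq_sym (negbTE z_neq1).
by rewrite eq_sym (negbTE z2_neq1) orbC.
Qed.

Lemma Porder_prim_root al i : al != - z ^+ 2 ->
  Porder z al i <-> [/\ al != - z, (0 < i)%N & i.+1.-primitive_root (pratio al ^+ 3)].
Proof.
move=> al_neqNz2; split.
- case=> [[al_neq0 al_neq1 al_neqNz _] [i_gt0 [Pi Pj]]]; split=> //.
  apply/prim_root_succP; split; first by apply/eqP; rewrite -Pcal_eq0 // Pi.
  case=> [_ | j lt_ji]; first by rewrite expr1 pratio_expr3_eq1 // negb_or al_neq0.
  by rewrite -Pcal_eq0 // Pj.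
- case=> al_neqNz i_gt0 /prim_root_succP[xi xj].
  have := xj 0%N i_gt0; rewrite expr1 pratio_expr3_eq1 // negb_or => /andP[al_neq0 al_neq1].
  do !split=> //; first by apply/eqP; rewrite Pcal_eq0 // xi.
  by move=> [//|j] /= lt_ji; rewrite Pcal_eq0 // xj.
Qed.

Lemma pratio_mob u : u != -1 -> u != z -> pratio (u / (1 + u)) = mob u.
Proof.
move=> u_neqN1 u_neq_z.
have u1_neq0 : 1 + u != 0 by rewrite addrC addr_eq0.
have zu_neq0 : z - u != 0 by rewrite subr_eq0 eq_sym.
have d_neq0 : u + z ^+ 2 * (1 + u) != 0.
  have -> : u + z ^+ 2 * (1 + u) = z * (z - u) by ring: z_sqrE.
  by rewrite mulf_neq0 ?z_neq0.
transitivity ((u + z * (1 + u)) / (u + z ^+ 2 * (1 + u))).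
  by rewrite /pratio; field; rewrite d_neq0.
apply/eqP; rewrite /mob eqr_div //; apply/eqP; ring: z_sqrE.
Qed.

Lemma mobK t : t != z -> mob (mob t) = t.
Proof.
move=> t_neq_z; have zt_neq0 : z - t != 0 by rewrite subr_eq0 eq_sym.
have d_neq0 : z * (z - t) - (1 - z * t) != 0.
  have -> : z * (z - t) - (1 - z * t) = z ^+ 2 - 1 by ring.
  by rewrite subr_eq0 z2_neq1.
by rewrite /mob; field; rewrite zt_neq0.
Qed.

Lemma prim_mob_neq t i : (0 < i)%N -> i.+1.-primitive_root (t ^+ 3) ->
  [/\ t != z, mob t != 0, mob t != -1, mob t != z & mob t != z ^+ 2].
Proof.
move=> i_gt0 t_prim.
have t_neq0 : t != 0 by move: (prim_root_eq0 t_prim); rewrite expf_eq0 /= => ->.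
have /prim_root_succP[_ /(_ 0%N i_gt0)] := t_prim; rewrite expr1 => t3_neq1.
have t_neq_z : t != z by apply: contraNneq t3_neq1 => ->; rewrite z_expr3.
have zt_neq0 : z - t != 0 by rewrite subr_eq0 eq_sym.
have mob_neq c : 1 - z * c - (z - c) * t != 0 -> mob t != c.
  move=> num_neq0; rewrite -subr_eq0.
  have -> : mob t - c = (1 - z * c - (z - c) * t) / (z - t) by rewrite /mob; field.
  by rewrite mulf_neq0 ?invr_eq0.
split=> //; apply: mob_neq.
- have -> : 1 - z * 0 - (z - 0) * t = z * (z ^+ 2 - t) by ring: z_sqrE.
  rewrite mulf_neq0 ?z_neq0 // subr_eq0.
  by apply: contraNneq t3_neq1 => <-; rewrite exprAC z_expr3 expr1n.
- have -> : 1 - z * -1 - (z - -1) * t = - z ^+ 2 * (1 - t) by ring: z_sqrE.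
  rewrite mulf_neq0 ?oppr_eq0 ?expf_neq0 ?z_neq0 // subr_eq0.
  by apply: contraNneq t3_neq1 => <-; rewrite expr1n.
- have -> : 1 - z * z - (z - z) * t = 1 - z ^+ 2 by ring.
  by rewrite subr_eq0 eq_sym z2_neq1.
- have -> : 1 - z * z ^+ 2 - (z - z ^+ 2) * t = (z ^+ 2 - z) * t by ring: z_sqrE.
  by rewrite mulf_neq0 // subr_eq0 z2_neq_z.
Qed.

Lemma frac_eqNz2 u : u != -1 -> (u / (1 + u) == - z ^+ 2) = (u == z).
Proof.
move=> u_neqN1; have u1_neq0 : 1 + u != 0 by rewrite addrC addr_eq0.
rewrite (can2_eq (divfK u1_neq0) (mulfK u1_neq0)) -subr_eq0.
have -> : u - - z ^+ 2 * (1 + u) = z * (z - u) by ring: z_sqrE.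
by rewrite mulf_eq0 (negbTE z_neq0) subr_eq0 eq_sym.
Qed.

Lemma frac_eqNz u : u != -1 -> (u / (1 + u) == - z) = (u == z ^+ 2).
Proof.
move=> u_neqN1; have u1_neq0 : 1 + u != 0 by rewrite addrC addr_eq0.
rewrite (can2_eq (divfK u1_neq0) (mulfK u1_neq0)) -subr_eq0.
have -> : u - - z * (1 + u) = z ^+ 2 * (z ^+ 2 - u) by ring: z_sqrE.
by rewrite mulf_eq0 expf_eq0 (negbTE z_neq0) andbF subr_eq0 eq_sym.
Qed.

Lemma Porder_mob u i : u != -1 -> (0 < i)%N ->
  Porder z (u / (1 + u)) i <-> exists2 t, i.+1.-primitive_root (t ^+ 3) & u = mob t.
Proof.
move=> u_neqN1 i_gt0; split=> [Pi | [t t_prim ->]].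
  have [[_ _ _ al_neqNz2] _] := Pi.
  have u_neq_z : u != z by rewrite -frac_eqNz2.
  have [_ _] := (Porder_prim_root i al_neqNz2).1 Pi.
  by rewrite pratio_mob // => t_prim; exists (mob u); rewrite ?mobK.
have [t_neq_z _ mob_neqN1 mob_neq_z mob_neq_z2] := prim_mob_neq i_gt0 t_prim.
apply/Porder_prim_root; first by rewrite frac_eqNz2.
by rewrite frac_eqNz // pratio_mob // mobK.
Qed.

Lemma Porder_dvdE al m :
    al != 0 -> al != 1 -> al != - z -> al != - z ^+ 2 -> (0 < m)%N ->
  (exists j, Porder z al j /\ (j.+1 %| m)%N) <-> pratio al ^+ 3 ^+ m = 1.
Proof.
move=> al_neq0 al_neq1 al_neqNz al_neqNz2 m_gt0; rewrite (expr_eq1_prim_order _ m_gt0).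
have x_neq1 : pratio al ^+ 3 != 1 by rewrite pratio_expr3_eq1 // negb_or al_neq0.
split=> [[j [/(Porder_prim_root _ al_neqNz2)[_ _ x_prim] j_dvd]] | ]; first by exists j.+1.
case=> -[|[|j]] x_prim n_dvd //.
  by rewrite -(prim_expr_order x_prim) expr1 eqxx in x_neq1.
by exists j.+1; split=> //; apply/(Porder_prim_root _ al_neqNz2).
Qed.

Lemma X3_Porder_iff q i (P : K * K) : (0 < mq q)%N -> (0 < i)%N ->
  inX3minusO q P /\ Porder z (alpha q P) i <->
  exists2 t, i.+1.-primitive_root (t ^+ 3) &
    P.1 ^+ mq q = mob t /\ P.2 ^+ q.+1 = - (P.1 ^+ (2 * mq q) + P.1 ^+ mq q).
Proof.
move=> m_gt0 i_gt0; case: P => a b; rewrite /inX3minusO /onX3 /alpha /=.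
set u := a ^+ mq q; set c := a ^+ (2 * mq q) + u.
have curveE : b ^+ q.+1 + a ^+ (2 * mq q) + u = 0 <-> b ^+ q.+1 = - c.
  by rewrite -addrA; split=> [/eqP | ->]; [rewrite addr_eq0 => /eqP | rewrite addNr].
split=> [[[[_ /curveE curve] u1_neq0] Pi] | [t t_prim [ut /curveE curve]]].
  have u_neqN1 : u != -1 by rewrite -addr_eq0.
  by have [t t_prim ut] := (Porder_mob u_neqN1 i_gt0).1 Pi; exists t.
have [_ mob_neq0 mob_neqN1 _ _] := prim_mob_neq i_gt0 t_prim.
rewrite -ut in mob_neq0 mob_neqN1.
split; last by apply/(Porder_mob mob_neqN1 i_gt0); exists t.
split; [split=> // | by rewrite addr_eq0].
by apply: contraNneq mob_neq0 => a0; rewrite /u a0 expr0n gtn_eqF.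
Qed.

End CubeRootOfUnity.

Lemma mq_spec q : (q %% 3 = 2)%N -> (3 * mq q = q.+1)%N.
Proof. by rewrite /mq; lia. Qed.

Lemma has_card_X3_Porder (K : closedFieldType) (z : K) q i :
    3.-primitive_root z -> (3 * mq q = q.+1)%N ->
    q.+1%:R != 0 :> K -> i.+1%:R != 0 :> K -> (0 < i)%N ->
  has_card (fun P => inX3minusO q P /\ Porder z (alpha q P) i)
           (q.+1 ^ 2 * totient i.+1).
Proof.
move=> z_prim Dm q1_neq0 i1_neq0 i_gt0; set m := mq q in Dm *.
have m_gt0 : (0 < m)%N by lia.
have m_neq0 : m%:R != 0 :> K.
  by move: q1_neq0; rewrite -Dm natrM mulf_eq0 negb_or => /andP[].
have three_neq0 := prim_root_natf_neq0 z_prim.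
have cube_card : has_card (fun t : K => i.+1.-primitive_root (t ^+ 3)) (3 * totient i.+1).
  have w_neq0 (w : K) : i.+1.-primitive_root w -> w != 0 by move/prim_root_eq0 ->.
  have := has_card_bind (g := fun t => t ^+ 3) (has_card_prim_roots i1_neq0)
    (fun w w_prim => has_card_roots three_neq0 (w_neq0 w w_prim)) (fun w t _ tw => tw).
  by apply: has_card_ext => t; split=> [[w w_prim ->] | t_prim] //; exists (t ^+ 3).
have root_card : has_card (fun a : K => exists2 t, i.+1.-primitive_root (t ^+ 3) &
                                                a ^+ m = mob z t) (m * (3 * totient i.+1)).
  apply: (has_card_bind (g := fun a => mob z (a ^+ m)) cube_card) => [t t_prim | t a t_prim ->].
    by have [_ mob_neq0 _ _ _] := prim_mob_neq z_prim i_gt0 t_prim; exact: has_card_roots.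
  by have [t_neq_z _ _ _ _] := prim_mob_neq z_prim i_gt0 t_prim; rewrite mobK.
have curve_neq0 a : (exists2 t, i.+1.-primitive_root (t ^+ 3) & a ^+ m = mob z t) ->
    - (a ^+ (2 * m) + a ^+ m) != 0.
  case=> t t_prim am; have [_ mob_neq0 mob_neqN1 _ _] := prim_mob_neq z_prim i_gt0 t_prim.
  rewrite oppr_eq0 mulnC exprM am -[X in _ + X]mulr1 -mulrDr mulf_neq0 //.
  by rewrite addr_eq0.
have -> : (q.+1 ^ 2 * totient i.+1 = q.+1 * (m * (3 * totient i.+1)))%N.
  by rewrite -Dm; ring.
have := has_card_bind (g := fst) root_card
  (fun a a_root => has_card_pair_fst a (has_card_roots q1_neq0 (curve_neq0 a a_root)))
  (fun a P _ => @proj1 _ _).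
apply: has_card_ext => -[a b]; split.
  case=> a' [t t_prim am] [/= -> curve].
  by apply/(X3_Porder_iff z_prim _ m_gt0 i_gt0); exists t.
case/(X3_Porder_iff z_prim _ m_gt0 i_gt0) => t t_prim [am curve].
by exists a; first exists t.
Qed.

Lemma expr_sq_fixed (K : fieldType) (x : K) n : x != 0 ->
  x ^+ (n ^ 2) = x <-> x ^+ n.+1 ^+ n = x ^+ n.+1.
Proof.
move=> x_neq0; rewrite -exprM mulSn exprD exprS mulnn mulrC.
by split=> [-> // | /(mulIf (expf_neq0 n x_neq0))].
Qed.

Lemma cyclo_of_expr3_sqrD (K : fieldType) (u v : K) :
  v ^+ 3 = u ^+ 3 -> v ^+ 2 + v = u ^+ 2 + u -> v = u \/ u ^+ 2 + u + 1 = 0.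
Proof.
move=> v3 v2.
have /eqP : (v - u) * (v + u + 1) = (v ^+ 2 + v) - (u ^+ 2 + u) by ring.
rewrite v2 subrr mulf_eq0 subr_eq0 => /orP[/eqP-> | /eqP vu1]; first by left.
have Dv : v = - u - 1 by rewrite -[v]subr0 -vu1; ring.
have /eqP : (2%:R * u + 1) * (u ^+ 2 + u + 1) = u ^+ 3 - v ^+ 3 by rewrite Dv; ring.
rewrite v3 subrr mulf_eq0 => /orP[/eqP u2 | /eqP]; last by right.
left; apply/eqP; rewrite Dv -subr_eq0.
rewrite (_ : - u - 1 - u = - (2%:R * u + 1)); last by ring.
by rewrite u2 oppr0.
Qed.

Section Rationality.

Variables (K : fieldType) (q : nat).
Hypotheses (q_char : [pchar K].-nat q) (q_mod3 : (q %% 3 = 2)%N).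

Let frobD (x y : K) : (x + y) ^+ q = x ^+ q + y ^+ q := exprDn_pchar x y q_char.
Let frobN (x : K) : (- x) ^+ q = - x ^+ q := exprNn_pchar x q_char.

Lemma expr_q_cube_root (x : K) : x ^+ 3 = 1 -> x ^+ q = x ^+ 2.
Proof. by move=> x3; rewrite (divn_eq q 3) q_mod3 exprD mulnC exprM x3 expr1n mul1r. Qed.

Lemma rationalq2_iff (a b : K) : a != 0 -> a ^+ mq q != -1 ->
    b ^+ q.+1 = - (a ^+ mq q ^+ 2 + a ^+ mq q) ->
  rationalq2 q (a, b) <-> a ^+ mq q ^+ q = a ^+ mq q \/ a ^+ mq q ^+ 2 + a ^+ mq q + 1 = 0.
Proof.
set u := a ^+ mq q => a_neq0 u_neqN1 curve.
have u_neq0 : u != 0 by rewrite expf_neq0.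
have c_neq0 : u ^+ 2 + u != 0.
  by rewrite (_ : u ^+ 2 + u = u * (u + 1)) ?mulf_neq0 ?addr_eq0 //; ring.
have b_neq0 : b != 0.
  by apply: contra_neq c_neq0 => b0; apply: oppr_inj; rewrite -curve b0 exprS !mul0r oppr0.
have aE : a ^+ q.+1 = u ^+ 3 by rewrite -mq_spec // mulnC exprM.
rewrite /rationalq2 /= (expr_sq_fixed _ a_neq0) (expr_sq_fixed _ b_neq0) aE curve.
rewrite frobN frobD exprAC [(u ^+ 2) ^+ q]exprAC.
split=> [[v3 /oppr_inj v2] | [-> // | cyclo]]; first exact: cyclo_of_expr3_sqrD.
have u2 : u ^+ 2 = - u - 1 by rewrite -[LHS]subr0 -cyclo; ring.
have u3 : u ^+ 3 = 1 by ring: u2.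
by rewrite (expr_q_cube_root u3); split; ring: u2.
Qed.

Lemma mob_expr_succ_eq1 (z : K) u : 3.-primitive_root z -> u != z ->
  (mob z u ^+ q.+1 == 1) = (u ^+ q == u).
Proof.
move=> z_prim u_neq_z.
have zq : z ^+ q = z ^+ 2 := expr_q_cube_root (z_expr3 z_prim).
have d1 : z - u != 0 by rewrite subr_eq0 eq_sym.
have d2 : z ^+ 2 - u ^+ q != 0 by rewrite -zq -frobN -frobD expf_neq0.
have d_neq0 := mulf_neq0 d1 d2.
have mobq : mob z u ^+ q = (1 - z ^+ 2 * u ^+ q) / (z ^+ 2 - u ^+ q).
  by rewrite /mob expr_div_n !frobD !frobN exprMn zq expr1n.
rewrite exprS mobq /mob mulf_div (can2_eq (divfK d_neq0) (mulfK d_neq0)) mul1r -subr_eq0.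
rewrite (_ : (1 - z * u) * (1 - z ^+ 2 * u ^+ q) - (z - u) * (z ^+ 2 - u ^+ q) =
             (z ^+ 2 - z) * (u - u ^+ q)); last by ring: (z_sqrE z_prim).
by rewrite mulf_eq0 subr_eq0 (negbTE (z2_neq_z z_prim)) subr_eq0 eq_sym.
Qed.

Lemma rationalq2_Porder (z : K) (P : K * K) : 3.-primitive_root z -> inX3minusO q P ->
  rationalq2 q P <->
  alpha q P ^+ 2 - alpha q P + 1 = 0 \/
  exists j, Porder z (alpha q P) j /\ (j.+1 %| mq q)%N.
Proof.
move=> z_prim; case: P => a b [[/= a_neq0 curve] u1_neq0]; rewrite /alpha /=.
set u := a ^+ mq q in u1_neq0 curve *; set al := u / (1 + u).
have m_gt0 : (0 < mq q)%N by have := mq_spec q_mod3; lia.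
have u_neqN1 : u != -1 by rewrite -addr_eq0.
have {}u1_neq0 : 1 + u != 0 by rewrite addrC.
have curveE : b ^+ q.+1 = - (u ^+ 2 + u).
  by apply/eqP; rewrite -addr_eq0 -exprM mulnC addrA curve.
rewrite (rationalq2_iff a_neq0 u_neqN1 curveE).
have alphaE : al ^+ 2 - al + 1 = (u ^+ 2 + u + 1) / (1 + u) ^+ 2 by rewrite /al; field.
have [cyclo | cyclo] := eqVneq (u ^+ 2 + u + 1) 0.
  by split=> _; [left; rewrite alphaE cyclo mul0r | right].
have alpha_neq0 : al ^+ 2 - al + 1 != 0 by rewrite alphaE mulf_neq0 ?invr_eq0 ?expf_neq0.
have u_neq_z : u != z.
  by apply: contraNneq cyclo => ->; apply/eqP; ring: (z_sqrE z_prim).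
have u_neq_z2 : u != z ^+ 2.
  by apply: contraNneq cyclo => ->; apply/eqP; ring: (z_sqrE z_prim).
have al_neq0 : al != 0 by rewrite mulf_neq0 ?expf_neq0 ?invr_eq0.
have al_neq1 : al != 1.
  by rewrite -subr_eq0 (_ : al - 1 = - (1 + u)^-1) ?oppr_eq0 ?invr_eq0 // /al; field.
have uqE : u ^+ q = u <-> pratio z al ^+ 3 ^+ mq q = 1.
  rewrite pratio_mob // -exprM mq_spec // (rwP eqP).
  by rewrite -(mob_expr_succ_eq1 z_prim u_neq_z); split=> /eqP.
have al_neqNz : al != - z by rewrite frac_eqNz.
have al_neqNz2 : al != - z ^+ 2 by rewrite frac_eqNz2.
rewrite uqE -(Porder_dvdE z_prim al_neq0 al_neq1 al_neqNz al_neqNz2 m_gt0).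
split=> [[Pj | cyclo_eq0] | [alpha_eq0 | Pj]]; [by right | | | by left].
  by rewrite cyclo_eq0 eqxx in cyclo.
by rewrite alpha_eq0 eqxx in alpha_neq0.
Qed.

End Rationality.

Theorem lemma3p8 (p k : nat) (K : closedFieldType) (z : K) (i : nat) :
  prime p -> (0 < k)%N -> ((p ^ k) %% 3 = 2)%N ->
  p \in [pchar K] ->
  (forall x : K, exists n : nat, (0 < n)%N /\ x ^+ (p ^ n) = x) ->
  3.-primitive_root z ->
  (0 < i)%N ->
  (exists s : seq (K * K),
      uniq s /\
      (forall P : K * K,
         P \in s <-> (inX3minusO (p ^ k) P /\ Porder z (alpha (p ^ k) P) i)) /\
      size s = (if coprime i.+1 p then (p ^ k).+1 ^ 2 * totient i.+1 else 0)%N)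
  /\
  (forall P : K * K, inX3minusO (p ^ k) P ->
     (rationalq2 (p ^ k) P <->
      (alpha (p ^ k) P ^+ 2 - alpha (p ^ k) P + 1 = 0 \/
       exists j : nat, Porder z (alpha (p ^ k) P) j /\ (j.+1 %| mq (p ^ k))%N))).
Proof.
move=> p_prime k_gt0 q_mod3 p_char _ z_prim i_gt0; set q := (p ^ k)%N in q_mod3 *.
have q_char : [pchar K].-nat q by rewrite pnatX pnatE ?p_char ?orbT.
split; last by move=> P; exact: rationalq2_Porder.
have Dm := mq_spec q_mod3; have m_gt0 : (0 < mq q)%N by lia.
case: ifP => [i1_coprime | /negbT i1_ncoprime].
  have q1_neq0 : q.+1%:R != 0 :> K.
    by rewrite -(dvdn_pcharf p_char) -addn1 dvdn_addr ?dvdn_exp // dvdn1 gtn_eqF ?prime_gt1.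
  have i1_neq0 : i.+1%:R != 0 :> K.
    by rewrite -(dvdn_pcharf p_char) -prime_coprime // coprime_sym.
  have [s [us ss sP]] := has_card_X3_Porder z_prim Dm q1_neq0 i1_neq0 i_gt0.
  by exists s.
exists [::]; split=> //; split=> // P.
split=> // /(X3_Porder_iff z_prim _ m_gt0 i_gt0)[t t_prim _].
move: p_char; rewrite (prim_root_pcharF t_prim) //.
by move: i1_ncoprime; rewrite coprime_sym prime_coprime // negbK.
Qed.
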